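(* Let $H=(\mathcal{V},\mathcal{I})$ be an interval hypergraph and let $\mathcal{P}=\{S_1,\dots,S_k\}$ be a partition of $\mathcal{I}$ such that each $S_i$ has an exact hitting set $h_i$. Let $R=\bigcup_{i=1}^k h_i$ and define $t:\mathcal{I}\to\mathcal{V}$ by letting $t(I)$ be the unique element of $I\cap h_i$, where $S_i$ is the part containing $I$. Let $G_{R,t}$ be the co-occurrence graph. If $Q=\{u_1,\dots,u_q\}$ is a clique of size $q$ in $G_{R,t}$, then there are $q$ distinct parts $s_1,\dots,s_q\in\mathcal{P}$ containing intervals $I_1,\dots,I_q$ respectively, such that for each $i$, $u_i=t(I_i)$, and for each edge $u_iu_j$ of $Q$, either $u_j\in I_i$ or $u_i\in I_j$.
   Context: An interval hypergraph has vertex set $[n]=\{1,\dots,n\}$ (ordered as points on a line) and hyperedges that are nonempty sets of consecutive integers. An exact hitting set of a family $S$ of hyperedges is a set $h\subseteq\mathcal{V}$ with $|h\cap I|=1$ for every $I\in S$. For a representative function $t$ (with $t(I)\in I$) and its image $R$, the co-occurrence graph $G_{R,t}$ has vertex set $R$, with distinct $u,v$ adjacent iff some $I\in\mathcal{I}$ has $u,v\in I$ and $t(I)\in\{u,v\}$. *)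

(* Vertices [n] = {1..n} are modelled by 'I_n = {0..n-1}
   with the order of nat (an order-isomorphic relabelling). *)
From mathcomp Require Import all_boot.
Set Implicit Arguments. Unset Strict Implicit. Unset Printing Implicit Defensive.

Definition is_interval (n : nat) (I : {set 'I_n}) : Prop :=
  I != set0 /\
  forall x y z : 'I_n, x \in I -> z \in I -> (x <= y)%N -> (y <= z)%N -> y \in I.

Definition exact_hitting_set (n : nat) (S : {set {set 'I_n}}) (h : {set 'I_n}) : Prop :=
  forall I, I \in S -> #|I :&: h| = 1%N.

(* Adjacency in the co-occurrence graph G_{R,t} (vertex set R = image of t):
   distinct u, v adjacent iff some hyperedge I contains both and t(I) \in {u, v}. *)
Definition cooc_adj (n : nat) (II : {set {set 'I_n}}) (t : {set 'I_n} -> 'I_n)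
  (u v : 'I_n) : Prop :=
  u <> v /\ exists I, [/\ I \in II, u \in I, v \in I & (t I = u \/ t I = v)].

From mathcomp Require Import all_boot.

(* Call I an x-interval if t(I) = x.  Induct on the clique: let x0 be its
   leftmost vertex and Is the x0-interval reaching farthest right.  A clique
   vertex y outside Is lies in no x0-interval, so its adjacency with x0 is
   witnessed by a y-interval containing x0, hence every clique vertex left of y;
   y takes that interval.  The clique vertices in Is other than x0 are handled
   by induction, and x0 takes Is.  The parts are then distinct: an interval of a
   part meets its hitting set once, so if u_j lies in I_i and I_i, I_j share a
   part, then u_j = t(I_i) = u_i. *)

Section CliqueIntervals.

Variables (n : nat) (II : {set {set 'I_n}}) (t : {set 'I_n} -> 'I_n).
Hypothesis II_interval : forall I, I \in II -> is_interval I.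
Hypothesis t_mem : forall I, I \in II -> t I \in I.

Lemma interval_mem_between {I : {set 'I_n}} {x y z : 'I_n} :
  I \in II -> x \in I -> z \in I -> x <= y <= z -> y \in I.
Proof. by move=> /II_interval[_ convI] xI zI /andP[]; apply: convI. Qed.

Lemma farthest_right_interval {x0 : 'I_n} :
  x0 \in t @: II ->
  exists2 Is, Is \in II /\ t Is = x0 &
    forall I (y : 'I_n), I \in II -> t I = x0 -> x0 <= y -> y \in I -> y \in Is.
Proof.
case/imsetP=> I0 I0_II x0_def.
pose reach := [pred y | [exists I in II, (t I == x0) && (y \in I)]].
have reach_x0 : reach x0.
  by apply/existsP; exists I0; rewrite I0_II x0_def eqxx t_mem.
case: (arg_maxnP (@nat_of_ord n) reach_x0) => y1 /existsP[Is].
case/andP=> Is_II /andP[/eqP tIs y1_Is] y1_max.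
have x0_Is : x0 \in Is by rewrite -tIs t_mem.
exists Is => // I y I_II tI x0_y y_I.
apply: (interval_mem_between Is_II x0_Is y1_Is).
rewrite x0_y; apply: y1_max.
by apply/existsP; exists I; rewrite I_II tI eqxx.
Qed.

Lemma left_reaching_interval {x0 y : 'I_n} :
  cooc_adj II t x0 y -> (forall I, I \in II -> t I = x0 -> y \notin I) ->
  exists2 J, J \in II /\ t J = y & forall x : 'I_n, x0 <= x <= y -> x \in J.
Proof.
move=> [_ [J [J_II x0_J y_J [tJ | tJ]]]] no_x0_interval.
  by have := no_x0_interval J J_II tJ; rewrite y_J.
by exists J => // x; apply: interval_mem_between J_II x0_J y_J.
Qed.

Lemma left_reaching_intervals {Q : {set 'I_n}} {x0 : 'I_n} {Is : {set 'I_n}} :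
  {in Q &, forall x y, x != y -> cooc_adj II t x y} ->
  x0 \in Q -> {in Q, forall y : 'I_n, x0 <= y} -> x0 \in Is ->
  (forall I (y : 'I_n), I \in II -> t I = x0 -> x0 <= y -> y \in I -> y \in Is) ->
  exists J : 'I_n -> {set 'I_n}, forall y, y \in Q :\: Is ->
    [/\ J y \in II, t (J y) = y & {in Q, forall x : 'I_n, x <= y -> x \in J y}].
Proof.
move=> Q_adj Q_x0 x0_min x0_Is Is_far.
suff J_ex y : exists J_y, y \in Q :\: Is ->
    [/\ J_y \in II, t J_y = y & {in Q, forall x : 'I_n, x <= y -> x \in J_y}].
  exact: fin_all_exists J_ex.
case: (boolP (y \in Q :\: Is)); last by exists set0.
case/setDP=> Q_y y_Is.
have adj_x0y : cooc_adj II t x0 y.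
  by apply: Q_adj => //; apply: contraNneq y_Is => <-.
have y_notin I : I \in II -> t I = x0 -> y \notin I.
  by move=> I_II tI; apply: contra y_Is; apply: Is_far => //; exact: x0_min.
have [J_y [J_II tJ] J_left] := left_reaching_interval adj_x0y y_notin.
by exists J_y => _; split=> // x Q_x x_y; rewrite J_left ?x0_min.
Qed.

Lemma clique_interval_choice (Q : {set 'I_n}) :
  Q \subset t @: II ->
  {in Q &, forall x y, x != y -> cooc_adj II t x y} ->
  exists Iv : 'I_n -> {set 'I_n},
    {in Q, forall x, Iv x \in II /\ t (Iv x) = x} /\
    {in Q &, forall x y, x != y -> y \in Iv x \/ x \in Iv y}.
Proof.
have [m] := ubnP #|Q|; elim: m Q => // m IHm Q /ltnSE cardQ Q_rep Q_adj.
have [-> | [x1 Q_x1]] := set_0Vmem Q.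
  by exists (fun=> set0); split=> x; rewrite inE.
case: (arg_minnP (@nat_of_ord n) Q_x1) => x0 Q_x0 x0_min.
have [Is [Is_II tIs] Is_far] :=
  farthest_right_interval (subsetP Q_rep x0 Q_x0).
have x0_Is : x0 \in Is by rewrite -tIs t_mem.
pose Q' := Q :&: Is :\ x0.
have [Iv' [Iv'_rep Iv'_adj]] : exists Iv' : 'I_n -> {set 'I_n},
    {in Q', forall x, Iv' x \in II /\ t (Iv' x) = x} /\
    {in Q' &, forall x y, x != y -> y \in Iv' x \/ x \in Iv' y}.
  apply: IHm.
  - apply: leq_trans cardQ; apply/proper_card/(sub_proper_trans _ (properD1 Q_x0)).
    exact/setSD/subsetIl.
  - exact: subset_trans (subsetDl _ _) (subset_trans (subsetIl _ _) Q_rep).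
  - by move=> x y /setD1P[_ /setIP[Q_x _]] /setD1P[_ /setIP[Q_y _]]; apply: Q_adj.
have [J J_spec] := left_reaching_intervals Q_adj Q_x0 x0_min x0_Is Is_far.
exists (fun x => if x == x0 then Is else if x \in Is then Iv' x else J x).
split.
  move=> x Q_x; case: eqP => [-> // | /eqP x_x0].
  case: ifP => [x_Is | /negbT x_Is].
    by apply: Iv'_rep; rewrite !inE x_x0 Q_x x_Is.
  by have [] := J_spec x; rewrite ?inE ?x_Is.
move=> x y Q_x Q_y; wlog lt_xy : x y Q_x Q_y / x < y.
  move=> wlog_lt x_y; case: (ltngtP x y) => [lt_xy | lt_yx | /val_inj eq_xy].
  - exact: wlog_lt.
  - by rewrite eq_sym in x_y; case: (wlog_lt y x) => // ?; [right | left].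
  - by rewrite eq_xy eqxx in x_y.
move=> _; have y_x0 : (y == x0) = false.
  by apply: contraTF lt_xy => /eqP ->; rewrite -leqNgt x0_min.
rewrite y_x0; have [y_Is | y_out] := boolP (y \in Is); last first.
  have [|_ _ J_left] := J_spec y; first by rewrite inE y_out.
  by right; apply: J_left (ltnW lt_xy).
case: eqP => [-> | /eqP x_x0]; first by left.
have x_Is : x \in Is.
  by apply: (interval_mem_between Is_II x0_Is y_Is); rewrite x0_min // ltnW.
rewrite x_Is; apply: Iv'_adj; rewrite ?inE ?x_x0 ?y_x0 ?Q_x ?Q_y ?x_Is ?y_Is //.
by rewrite neq_ltn lt_xy.
Qed.

End CliqueIntervals.

Lemma exact_hitting_set_unique {n} {S : {set {set 'I_n}}} {h I} {x y : 'I_n} :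
  exact_hitting_set S h -> I \in S -> x \in I :&: h -> y \in I :&: h -> x = y.
Proof.
move=> hit_S S_I; have /eqP/cards1P[z ->] := hit_S I S_I.
by rewrite !inE => /eqP-> /eqP->.
Qed.

Lemma same_block_rep_eq {n} {II : {set {set 'I_n}}} {P h t I J} :
  partition P II ->
  (forall S, S \in P -> exact_hitting_set S (h S)) ->
  (forall I, I \in II -> t I \in I :&: h (pblock P I)) ->
  I \in II -> J \in II -> pblock P I = pblock P J -> t J \in I -> t J = t I.
Proof.
move=> partP hit t_rep II_I II_J same_block tJ_I.
have cover_I : I \in cover P by case/and3P: partP => /eqP->.
apply: (exact_hitting_set_unique (hit _ (pblock_mem cover_I)) (I := I)).
- by rewrite mem_pblock.
- by rewrite inE tJ_I same_block; case/setIP: (t_rep J II_J).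
- exact: t_rep.
Qed.

Theorem lemma7 (n : nat) (II : {set {set 'I_n}})
  (P : {set {set {set 'I_n}}}) (h : {set {set 'I_n}} -> {set 'I_n})
  (t : {set 'I_n} -> 'I_n) :
  (forall I, I \in II -> is_interval I) ->
  partition P II ->
  (forall S, S \in P -> exact_hitting_set S (h S)) ->
  (* t(I) is the unique element of I \cap h_i, where S_i is the part containing I *)
  (forall I, I \in II -> t I \in I :&: h (pblock P I)) ->
  forall (q : nat) (u : 'I_q -> 'I_n),
    injective u ->
    (forall i, u i \in [set t I | I in II]) ->
    (forall i j, i != j -> cooc_adj II t (u i) (u j)) ->
    exists (s : 'I_q -> {set {set 'I_n}}) (Iv : 'I_q -> {set 'I_n}),
      [/\ injective s,
          (forall i, s i \in P /\ Iv i \in s i /\ u i = t (Iv i)) &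
          (forall i j, i != j -> u j \in Iv i \/ u i \in Iv j)].
Proof.
move=> II_interval partP hit t_rep q u u_inj u_rep u_adj.
have t_mem I : I \in II -> t I \in I by case/t_rep/setIP.
have Q_u i : u i \in u @: [set: 'I_q] by rewrite imset_f ?inE.
have [Iv [Iv_rep Iv_adj]] : exists Iv : 'I_n -> {set 'I_n},
    {in u @: [set: 'I_q], forall x, Iv x \in II /\ t (Iv x) = x} /\
    {in u @: [set: 'I_q] &, forall x y, x != y -> y \in Iv x \/ x \in Iv y}.
  apply: clique_interval_choice => //.
    by apply/subsetP => _ /imsetP[i _ ->].
  move=> _ _ /imsetP[i _ ->] /imsetP[j _ ->] u_ij.
  by apply: u_adj; apply: contraNneq u_ij => ->.
have II_Iv i : Iv (u i) \in II by case: (Iv_rep _ (Q_u i)).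
have t_Iv i : t (Iv (u i)) = u i by case: (Iv_rep _ (Q_u i)).
have cover_Iv i : Iv (u i) \in cover P by case/and3P: partP => /eqP->.
have adj_Iv i j : i != j -> u j \in Iv (u i) \/ u i \in Iv (u j).
  by move=> ij; apply: Iv_adj => //; rewrite (inj_eq u_inj).
exists (fun i => pblock P (Iv (u i))), (fun i => Iv (u i)); split.
- move=> i j same_block; apply: u_inj; rewrite -t_Iv -[u j]t_Iv.
  have [-> // | ij] := eqVneq i j.
  case: (adj_Iv i j ij) => [uj_Ivi | ui_Ivj].
    by symmetry; apply: (same_block_rep_eq partP hit t_rep); rewrite ?t_Iv.
  by apply: (same_block_rep_eq partP hit t_rep); rewrite ?t_Iv.
- by move=> i; rewrite pblock_mem ?mem_pblock ?t_Iv.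
- exact: adj_Iv.
Qed.
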